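(* Let $\phi$ be a sentence of $\mathbf{FO}(=\!(\cdot),\mathrm{All}_1,\sqcup,[\cdot])$. Then $\phi$ is logically equivalent to some first-order sentence $\phi'$, i.e. $\mathfrak M\models_{\{\emptyset\}}\phi$ iff $\mathfrak M\models\phi'$ for every structure $\mathfrak M$.
   Context: Team semantics (lax version). For a structure $\mathfrak M$ with domain $M$, a team $X$ is a (possibly empty) set of assignments $s:V\to M$, $V$ a finite set of variables; $X(v)=\{s(v):s\in X\}$. Satisfaction for formulas in negation normal form: first-order literal $\alpha$: every $s\in X$ satisfies $\alpha$ (Tarski); $\psi\vee\theta$: $X=Y\cup Z$ with $\mathfrak M\models_Y\psi$, $\mathfrak M\models_Z\theta$; $\psi\wedge\theta$: both; $\exists v\psi$: some $F:X\to\mathcal P(M)\setminus\{\emptyset\}$ with $\mathfrak M\models_{X[F/v]}\psi$, $X[F/v]=\{s[m/v]:s\in X,m\in F(s)\}$; $\forall v\psi$: $\mathfrak M\models_{X[M/v]}\psi$, $X[M/v]=\{s[m/v]:s\in X,m\in M\}$. A sentence is true in $\mathfrak M$ iff $\mathfrak M\models_{\{\emptyset\}}\phi$. Operators: constancy atoms (all arities) $\mathfrak M\models_X=\!(\vec v)$ iff $s(\vec v)=s'(\vec v)$ for all $s,s'\in X$; unary totality atom $\mathfrak M\models_X\mathrm{All}_1(v)$ iff $X(v)=M$; classical disjunction $\mathfrak M\models_X\phi\sqcup\psi$ iff $\mathfrak M\models_X\phi$ or $\mathfrak M\models_X\psi$; for a first-order sentence $\theta$, $\mathfrak M\models_X[\theta]$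 iff $\mathfrak M\models\theta$ in Tarski semantics. *)

From Stdlib Require Import List Arith PeanoNat.
Import ListNotations.
Set Implicit Arguments.

(* A first-order signature: function symbols F, relation symbols Rl (arities are
   left implicit: interpretations act on argument lists). Variables are nat. *)
Inductive term (F : Type) : Type :=
| Var : nat -> term F
| App : F -> list (term F) -> term F.
Arguments Var {F} _. Arguments App {F} _ _.

Record structure (F Rl : Type) := {
  dom : Type;
  dom_inh : dom;
  fun_i : F -> list dom -> dom;
  rel_i : Rl -> list dom -> Prop }.

Definition assignment (M : Type) := nat -> option M.
Definition empty_asg {M : Type} : assignment M := fun _ => None.
Definition upd {M : Type} (s : assignment M) (v : nat) (m : M) : assignment M :=
  fun w => if Nat.eqb w v then Some m else s w.

Section Eval.
Context {F Rl : Type} (A : structure F Rl).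

Fixpoint eval (s : assignment (dom A)) (t : term F) : option (dom A) :=
  match t with
  | Var n => s n
  | App f ts =>
      let fix go (l : list (term F)) : option (list (dom A)) :=
        match l with
        | nil => Some nil
        | t' :: l' => match eval s t', go l' with
                      | Some a, Some b => Some (a :: b)
                      | _, _ => None end
        end in
      option_map (fun_i A f) (go ts)
  end.

Fixpoint evals (s : assignment (dom A)) (l : list (term F)) : option (list (dom A)) :=
  match l with
  | nil => Some nil
  | t :: l' => match eval s t, evals s l' with
               | Some a, Some b => Some (a :: b)
               | _, _ => None end
  end.
End Eval.

Fixpoint term_fv {F : Type} (t : term F) : list nat :=
  match t with
  | Var n => [n]
  | App _ ts => let fix go (l : list (term F)) : list nat :=
                  match l with nil => nil | t' :: l' => term_fv t' ++ go l' end
                in go ts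
  end.
Definition terms_fv {F : Type} (l : list (term F)) : list nat := flat_map term_fv l.

Inductive literal (F Rl : Type) : Type :=
| LRel : Rl -> list (term F) -> literal F Rl
| LNRel : Rl -> list (term F) -> literal F Rl
| LEq : term F -> term F -> literal F Rl
| LNEq : term F -> term F -> literal F Rl.
Arguments LRel {F Rl}. Arguments LNRel {F Rl}. Arguments LEq {F Rl}. Arguments LNEq {F Rl}.

Definition lit_fv {F Rl : Type} (a : literal F Rl) : list nat :=
  match a with
  | LRel _ ts | LNRel _ ts => terms_fv ts
  | LEq t1 t2 | LNEq t1 t2 => term_fv t1 ++ term_fv t2
  end.

(* Tarski satisfaction of a literal (literals with undefined variables fail;
   irrelevant for sentences). *)
Definition lit_sat {F Rl : Type} (A : structure F Rl) (s : assignment (dom A))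
  (a : literal F Rl) : Prop :=
  match a with
  | LRel R ts => exists ms, evals A s ts = Some ms /\ rel_i A R ms
  | LNRel R ts => exists ms, evals A s ts = Some ms /\ ~ rel_i A R ms
  | LEq t1 t2 => exists m, eval A s t1 = Some m /\ eval A s t2 = Some m
  | LNEq t1 t2 => exists m1 m2, eval A s t1 = Some m1 /\ eval A s t2 = Some m2 /\ m1 <> m2
  end.

Inductive fo (F Rl : Type) : Type :=
| FLit : literal F Rl -> fo F Rl
| FAnd : fo F Rl -> fo F Rl -> fo F Rl
| FOr : fo F Rl -> fo F Rl -> fo F Rl
| FEx : nat -> fo F Rl -> fo F Rl
| FAll : nat -> fo F Rl -> fo F Rl.
Arguments FLit {F Rl}. Arguments FAnd {F Rl}. Arguments FOr {F Rl}. Arguments FEx {F Rl}. Arguments FAll {F Rl}.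

Fixpoint fo_fv {F Rl : Type} (p : fo F Rl) : list nat :=
  match p with
  | FLit a => lit_fv a
  | FAnd p q | FOr p q => fo_fv p ++ fo_fv q
  | FEx v p | FAll v p => remove Nat.eq_dec v (fo_fv p)
  end.

Definition fo_sentence {F Rl : Type} (p : fo F Rl) : Prop := fo_fv p = nil.

Fixpoint tarski {F Rl : Type} (A : structure F Rl) (s : assignment (dom A))
  (p : fo F Rl) : Prop :=
  match p with
  | FLit a => lit_sat A s a
  | FAnd p q => tarski A s p /\ tarski A s q
  | FOr p q => tarski A s p \/ tarski A s q
  | FEx v p => exists m, tarski A (upd s v m) p
  | FAll v p => forall m, tarski A (upd s v m) p
  end.

Definition fo_true {F Rl : Type} (A : structure F Rl) (p : fo F Rl) : Prop :=
  tarski A empty_asg p.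

Inductive tformula (F Rl : Type) : Type :=
| TLit : literal F Rl -> tformula F Rl
| TAnd : tformula F Rl -> tformula F Rl -> tformula F Rl
| TOr : tformula F Rl -> tformula F Rl -> tformula F Rl
| TEx : nat -> tformula F Rl -> tformula F Rl
| TAll : nat -> tformula F Rl -> tformula F Rl
| TConst : list nat -> tformula F Rl
| TAll1 : nat -> tformula F Rl
| TCOr : tformula F Rl -> tformula F Rl -> tformula F Rl
| TBrack : fo F Rl -> tformula F Rl.
Arguments TLit {F Rl}. Arguments TAnd {F Rl}. Arguments TOr {F Rl}. Arguments TEx {F Rl}. Arguments TAll {F Rl}.
Arguments TConst {F Rl}. Arguments TAll1 {F Rl}. Arguments TCOr {F Rl}. Arguments TBrack {F Rl}.

Fixpoint t_fv {F Rl : Type} (p : tformula F Rl) : list nat :=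
  match p with
  | TLit a => lit_fv a
  | TAnd p q | TOr p q | TCOr p q => t_fv p ++ t_fv q
  | TEx v p | TAll v p => remove Nat.eq_dec v (t_fv p)
  | TConst vs => vs
  | TAll1 v => [v]
  | TBrack _ => nil
  end.

Fixpoint brackets_ok {F Rl : Type} (p : tformula F Rl) : Prop :=
  match p with
  | TLit _ | TConst _ | TAll1 _ => True
  | TAnd p q | TOr p q | TCOr p q => brackets_ok p /\ brackets_ok q
  | TEx _ p | TAll _ p => brackets_ok p
  | TBrack th => fo_sentence th
  end.

Definition t_sentence {F Rl : Type} (p : tformula F Rl) : Prop :=
  t_fv p = nil /\ brackets_ok p.

Definition team (M : Type) := assignment M -> Prop.

(* Lax team semantics *)
Fixpoint tsat {F Rl : Type} (A : structure F Rl) (X : team (dom A))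
  (p : tformula F Rl) : Prop :=
  match p with
  | TLit a => forall s, X s -> lit_sat A s a
  | TAnd p q => tsat A X p /\ tsat A X q
  | TOr p q => exists Y Z : team (dom A),
      (forall s, X s <-> (Y s \/ Z s)) /\ tsat A Y p /\ tsat A Z q
  | TEx v p => exists G : assignment (dom A) -> dom A -> Prop,
      (forall s, X s -> exists m, G s m) /\
      tsat A (fun s' => exists s m, X s /\ G s m /\ s' = upd s v m) p
  | TAll v p => tsat A (fun s' => exists s m, X s /\ s' = upd s v m) p
  | TConst vs => forall s s', X s -> X s' -> map s vs = map s' vs
  | TAll1 v => forall m : dom A, exists s, X s /\ s v = Some m
  | TCOr p q => tsat A X p \/ tsat A X q
  | TBrack th => fo_true A th
  end.

Definition t_true {F Rl : Type} (A : structure F Rl) (p : tformula F Rl) : Prop :=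
  tsat A (fun s => s = empty_asg) p.

(* Over teams, every formula of FO(=(.), All_1, classical disjunction, [.]) is equivalent to a
   finite classical disjunction of conditions of the following shape: for some values e of
   finitely many parameters, a first-order gamma(e) holds, every assignment s of the team satisfies
   a first-order alpha(s, e), and for each j and every value m some s in the team satisfies
   beta_j(s, e[d_j := m]).  A constancy atom =(v1, ..., vn) contributes parameters equal to
   v1, ..., vn throughout the team, All_1(v) the clause "every m is some s(v)", [theta] the
   conjunct gamma = theta; the team connectives and quantifiers preserve the shape as long as
   the parameters of different subformulas are kept apart.  On the team {emptyset} the conditions
   quantifying over the team collapse, and each disjunct becomes the first-order sentence
   exists e, gamma /\ alpha /\ /\_j forall d_j, beta_j. *)

From Stdlib Require Import List PeanoNat Lia Classical FunctionalExtensionality.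
Import ListNotations.

Fixpoint term_ind_nested {F : Type} (P : term F -> Prop) (HVar : forall n, P (Var n))
  (HApp : forall f ts, Forall P ts -> P (App f ts)) (t : term F) : P t :=
  match t with
  | Var n => HVar n
  | App f ts => HApp f ts ((fix go (l : list (term F)) : Forall P l :=
      match l with
      | nil => Forall_nil _
      | t' :: l' => Forall_cons _ (term_ind_nested P HVar HApp t') (go l')
      end) ts)
  end.

Lemma term_fv_App {F : Type} (f : F) ts : term_fv (App f ts) = terms_fv ts.
Proof. simpl; induction ts as [|t ts IH]; simpl; [|rewrite IH]; reflexivity. Qed.

Lemma agree_app {M : Type} (s s' : assignment M) l1 l2 :
  (forall v, In v (l1 ++ l2) -> s v = s' v) ->
  (forall v, In v l1 -> s v = s' v) /\ (forall v, In v l2 -> s v = s' v).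
Proof. intros H; split; intros v Hv; apply H, in_or_app; auto. Qed.

Lemma agree_upd {M : Type} (s s' : assignment M) x m l :
  (forall v, In v (remove Nat.eq_dec x l) -> s v = s' v) ->
  forall v, In v l -> upd s x m v = upd s' x m v.
Proof.
  intros H v Hv; unfold upd; destruct (Nat.eqb_spec v x); auto.
  apply H, in_in_remove; auto.
Qed.

Section Coincidence.
Context {F Rl : Type} (A : structure F Rl).

Lemma eval_App s f ts : eval A s (App f ts) = option_map (fun_i A f) (evals A s ts).
Proof. simpl; f_equal; induction ts as [|t ts IH]; simpl; [|rewrite IH]; reflexivity. Qed.

Lemma eval_agree s s' t :
  (forall v, In v (term_fv t) -> s v = s' v) -> eval A s t = eval A s' t.
Proof.
  induction t as [n|f ts Hts] using term_ind_nested; intros Hag.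
  - apply Hag; left; reflexivity.
  - rewrite !eval_App; f_equal; rewrite term_fv_App in Hag.
    induction Hts as [|t ts Ht Hts IH]; simpl in *; auto.
    destruct (agree_app _ _ _ _ Hag); rewrite Ht, IH; auto.
Qed.

Lemma evals_agree s s' ts :
  (forall v, In v (terms_fv ts) -> s v = s' v) -> evals A s ts = evals A s' ts.
Proof.
  induction ts as [|t ts IH]; simpl; intros Hag; auto.
  destruct (agree_app _ _ _ _ Hag); rewrite (eval_agree s s'), IH; auto.
Qed.

Lemma tarski_agree p : forall s s',
  (forall v, In v (fo_fv p) -> s v = s' v) -> (tarski A s p <-> tarski A s' p).
Proof.
  induction p as [a|p IHp q IHq|p IHp q IHq|x p IHp|x p IHp]; intros s s' Hag; simpl in *.
  - destruct a; simpl in *;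
      [| |destruct (agree_app _ _ _ _ Hag); rewrite (eval_agree s s' t), (eval_agree s s' t0)..];
      try rewrite (evals_agree s s'); auto; reflexivity.
  - destruct (agree_app _ _ _ _ Hag); rewrite (IHp s s'), (IHq s s'); tauto.
  - destruct (agree_app _ _ _ _ Hag); rewrite (IHp s s'), (IHq s s'); tauto.
  - setoid_rewrite (fun m => IHp (upd s x m) (upd s' x m) (agree_upd s s' x m _ Hag)).
    reflexivity.
  - setoid_rewrite (fun m => IHp (upd s x m) (upd s' x m) (agree_upd s s' x m _ Hag)).
    reflexivity.
Qed.

Definition fo_top : fo F Rl := FAll 0 (FLit (LEq (Var 0) (Var 0))).
Definition fo_bot : fo F Rl := FAll 0 (FLit (LNEq (Var 0) (Var 0))).

Lemma tarski_top s : tarski A s fo_top.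
Proof. intros m; exists m; unfold upd; simpl; auto. Qed.

Lemma tarski_bot s : ~ tarski A s fo_bot.
Proof.
  intros H; destruct (H (dom_inh A)) as [m1 [m2 [H1 [H2 Hne]]]].
  unfold upd in *; simpl in *; congruence.
Qed.

Definition fo_conj (l : list (fo F Rl)) : fo F Rl := fold_right FAnd fo_top l.
Definition fo_disj (l : list (fo F Rl)) : fo F Rl := fold_right FOr fo_bot l.
Definition fo_exs (vs : list nat) (p : fo F Rl) : fo F Rl := fold_right FEx p vs.

Lemma tarski_conj s l : tarski A s (fo_conj l) <-> forall p, In p l -> tarski A s p.
Proof.
  induction l as [|p l IH]; simpl.
  - split; [intros _ p []|intros _; exact (tarski_top s)].
  - rewrite IH; split; [intros [Hp Hl] q [<-|Hq]|]; auto.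
Qed.

Lemma tarski_disj s l : tarski A s (fo_disj l) <-> exists p, In p l /\ tarski A s p.
Proof.
  induction l as [|p l IH]; simpl.
  - split; [intros H; destruct (tarski_bot s H)|intros [p [[] _]]].
  - rewrite IH; split.
    + intros [Hp|[q [Hq Hs]]]; eauto.
    + intros [q [[<-|Hq] Hs]]; eauto.
Qed.

Lemma fo_fv_conj l v : In v (fo_fv (fo_conj l)) -> exists p, In p l /\ In v (fo_fv p).
Proof.
  induction l as [|p l IH]; simpl; [intros []|].
  intros Hv; apply in_app_or in Hv as [Hv|Hv]; [eauto|].
  destruct (IH Hv) as [q [Hq Hvq]]; eauto.
Qed.

Lemma fo_fv_disj l v : In v (fo_fv (fo_disj l)) -> exists p, In p l /\ In v (fo_fv p).
Proof.
  induction l as [|p l IH]; simpl; [intros []|].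
  intros Hv; apply in_app_or in Hv as [Hv|Hv]; [eauto|].
  destruct (IH Hv) as [q [Hq Hvq]]; eauto.
Qed.

Lemma fo_fv_exs vs p v : In v (fo_fv (fo_exs vs p)) -> In v (fo_fv p) /\ ~ In v vs.
Proof.
  induction vs as [|x vs IH]; simpl; [tauto|].
  intros Hv; apply in_remove in Hv as [Hv Hne].
  destruct (IH Hv); split; [|intros [->|]]; auto.
Qed.

Lemma tarski_exs_elim vs p : forall s, tarski A s (fo_exs vs p) ->
  exists s', (forall v, ~ In v vs -> s' v = s v) /\ (forall v, In v vs -> s' v <> None) /\
    tarski A s' p.
Proof.
  induction vs as [|x vs IH]; intros s H.
  - exists s; repeat split; auto; intros v [].
  - destruct H as [m Hm]; destruct (IH _ Hm) as [s' [Hout [Hin Hp]]].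
    exists s'; repeat split; auto.
    + intros v Hv; rewrite Hout by (intros Hv'; apply Hv; right; auto).
      unfold upd; destruct (Nat.eqb_spec v x); [exfalso; apply Hv; left|]; auto.
    + intros v [<-|Hv]; auto.
      destruct (in_dec Nat.eq_dec x vs); auto.
      rewrite Hout by auto; unfold upd; rewrite Nat.eqb_refl; discriminate.
Qed.

Lemma tarski_exs_intro vs p : forall s s',
  (forall v, In v vs -> s' v <> None) -> (forall v, In v (fo_fv p) -> ~ In v vs -> s' v = s v) ->
  tarski A s' p -> tarski A s (fo_exs vs p).
Proof.
  induction vs as [|x vs IH]; intros s s' Hdef Hout Hp; simpl.
  - apply (tarski_agree p s' s); auto.
  - destruct (s' x) as [m|] eqn:Ex; [|destruct (Hdef x); auto; left; auto].
    exists m; apply (IH _ s'); auto.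
    + intros v Hv; apply Hdef; right; auto.
    + intros v Hv Hvs; unfold upd; destruct (Nat.eqb_spec v x); [congruence|].
      apply Hout; auto; intros [->|]; auto.
Qed.

End Coincidence.

(* Variables below [N] are team variables; from [N] on they are parameters, read from a total
   valuation [e]. *)
Definition merge {M : Type} (N : nat) (s : assignment M) (e : nat -> M) : assignment M :=
  fun v => if v <? N then s v else Some (e v).

Definition set_param {M : Type} (e : nat -> M) (d : nat) (m : M) : nat -> M :=
  fun w => if w =? d then m else e w.

Definition glue {M : Type} (c : nat) (e1 e2 : nat -> M) : nat -> M :=
  fun v => if v <? c then e1 v else e2 v.

Lemma merge_upd_team {M : Type} N (s : assignment M) e v m :
  v < N -> merge N (upd s v m) e = upd (merge N s e) v m.
Proof.
  intros Hv; apply functional_extensionality; intros u; unfold merge, upd.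
  destruct (Nat.eqb_spec u v), (Nat.ltb_spec u N); subst; auto; lia.
Qed.

Lemma merge_set_param {M : Type} N (s : assignment M) e d m :
  N <= d -> merge N s (set_param e d m) = upd (merge N s e) d m.
Proof.
  intros Hd; apply functional_extensionality; intros u; unfold merge, upd, set_param.
  destruct (Nat.eqb_spec u d), (Nat.ltb_spec u N); subst; auto; lia.
Qed.

Record nf (F Rl : Type) := NF {
  nf_glob : fo F Rl;
  nf_flat : fo F Rl;
  nf_cover : list (nat * fo F Rl) }.
Arguments NF {F Rl}.
Arguments nf_glob {F Rl}.
Arguments nf_flat {F Rl}.
Arguments nf_cover {F Rl}.

Section NormalFormSyntax.
Context {F Rl : Type}.

Definition map_cover (f : fo F Rl -> fo F Rl) (cs : list (nat * fo F Rl)) :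
  list (nat * fo F Rl) := map (fun c => (fst c, f (snd c))) cs.

Lemma in_map_cover f cs d b :
  In (d, b) (map_cover f cs) <-> exists b0, In (d, b0) cs /\ b = f b0.
Proof.
  unfold map_cover; rewrite in_map_iff; split.
  - intros [[d0 b0] [E Hin]]; simpl in E; injection E as <- <-; eauto.
  - intros [b0 [Hin ->]]; exists (d, b0); auto.
Qed.

Definition nf_and (D1 D2 : nf F Rl) : nf F Rl :=
  NF (FAnd (nf_glob D1) (nf_glob D2)) (FAnd (nf_flat D1) (nf_flat D2))
     (nf_cover D1 ++ nf_cover D2).

(* The split of the team is recovered as the assignments satisfying [nf_flat D1], resp.
   [nf_flat D2]; the witnesses of a cover clause of [D1] must come from the first part. *)
Definition nf_or (D1 D2 : nf F Rl) : nf F Rl :=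
  NF (FAnd (nf_glob D1) (nf_glob D2)) (FOr (nf_flat D1) (nf_flat D2))
     (map_cover (FAnd (nf_flat D1)) (nf_cover D1) ++
      map_cover (FAnd (nf_flat D2)) (nf_cover D2)).

Definition nf_ex (v : nat) (D : nf F Rl) : nf F Rl :=
  NF (nf_glob D) (FEx v (nf_flat D))
     (map_cover (fun b => FEx v (FAnd (nf_flat D) b)) (nf_cover D)).

Definition nf_all (v : nat) (D : nf F Rl) : nf F Rl :=
  NF (nf_glob D) (FAll v (nf_flat D)) (map_cover (FEx v) (nf_cover D)).

Definition nf_prod (op : nf F Rl -> nf F Rl -> nf F Rl) (Ds1 Ds2 : list (nf F Rl)) :
  list (nf F Rl) := flat_map (fun D1 => map (op D1) Ds2) Ds1.

Lemma in_nf_prod op Ds1 Ds2 D :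
  In D (nf_prod op Ds1 Ds2) <-> exists D1 D2, In D1 Ds1 /\ In D2 Ds2 /\ D = op D1 D2.
Proof.
  unfold nf_prod; rewrite in_flat_map; split.
  - intros [D1 [H1 HD]]; apply in_map_iff in HD as [D2 [<- H2]]; eauto.
  - intros [D1 [D2 [H1 [H2 ->]]]]; exists D1; split; auto; apply in_map; auto.
Qed.

Fixpoint const_eqs (b : nat) (vs : list nat) : fo F Rl :=
  match vs with
  | [] => fo_top
  | v :: vs' => FAnd (FLit (LEq (Var v) (Var b))) (const_eqs (S b) vs')
  end.

Lemma fo_fv_const_eqs b vs u :
  In u (fo_fv (const_eqs b vs)) -> In u vs \/ b <= u < b + length vs.
Proof.
  revert b; induction vs as [|v vs IH]; intros b Hu; simpl in *; [contradiction|].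
  destruct Hu as [<-|[<-|Hu]]; auto; [right; lia|].
  destruct (IH _ Hu); [tauto|right; lia].
Qed.

Definition in_scope (N : nat) (fvs : list nat) (lo hi v : nat) : Prop :=
  (v < N /\ In v fvs) \/ lo <= v < hi.

Definition cover_fresh (D : nf F Rl) : Prop :=
  forall d b, In (d, b) (nf_cover D) -> ~ In d (fo_fv (nf_flat D)).

Definition nf_scoped (N : nat) (fvs : list nat) (lo hi : nat) (D : nf F Rl) : Prop :=
  (forall v, In v (fo_fv (nf_glob D)) -> lo <= v < hi) /\
  (forall v, In v (fo_fv (nf_flat D)) -> in_scope N fvs lo hi v) /\
  cover_fresh D /\
  (forall d b, In (d, b) (nf_cover D) ->
     lo <= d < hi /\ forall v, In v (fo_fv b) -> in_scope N fvs lo hi v).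

Lemma in_scope_mono N fvs fvs' lo hi lo' hi' v :
  incl fvs fvs' -> lo' <= lo -> hi <= hi' -> in_scope N fvs lo hi v -> in_scope N fvs' lo' hi' v.
Proof. intros Hf Hlo Hhi [[Hv Hin]|Hv]; [left; auto|right; lia]. Qed.

Lemma in_scope_app N fvs1 fvs2 lo c hi l1 l2 :
  lo <= c <= hi ->
  (forall v, In v l1 -> in_scope N fvs1 lo c v) -> (forall v, In v l2 -> in_scope N fvs2 c hi v) ->
  forall v, In v (l1 ++ l2) -> in_scope N (fvs1 ++ fvs2) lo hi v.
Proof.
  intros Hc H1 H2 v Hv; apply in_app_or in Hv as [Hv|Hv];
    [apply H1 in Hv|apply H2 in Hv]; revert Hv; apply in_scope_mono; auto with datatypes; lia.
Qed.

Lemma in_scope_remove N fvs lo hi x l :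
  (forall v, In v l -> in_scope N fvs lo hi v) ->
  forall v, In v (remove Nat.eq_dec x l) -> in_scope N (remove Nat.eq_dec x fvs) lo hi v.
Proof.
  intros H v Hv; apply in_remove in Hv as [Hv Hne].
  destruct (H v Hv) as [[Hlt Hin]|Hr]; [left; split; auto; apply in_in_remove|right]; auto.
Qed.

Lemma nf_scoped_mono N fvs fvs' lo hi lo' hi' D :
  incl fvs fvs' -> lo' <= lo -> hi <= hi' -> nf_scoped N fvs lo hi D -> nf_scoped N fvs' lo' hi' D.
Proof.
  intros Hf Hlo Hhi [Hg [Ha [Hfr Hc]]]; split; [|split; [|split]]; auto.
  - intros v Hv; specialize (Hg v Hv); lia.
  - intros v Hv; eapply in_scope_mono; eauto.
  - intros d b Hdb; destruct (Hc d b Hdb) as [Hd Hb]; split; [lia|].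
    intros v Hv; eapply in_scope_mono; eauto.
Qed.

Lemma nf_scoped_and N fvs1 fvs2 lo c hi D1 D2 :
  N <= lo <= c -> c <= hi -> nf_scoped N fvs1 lo c D1 -> nf_scoped N fvs2 c hi D2 ->
  nf_scoped N (fvs1 ++ fvs2) lo hi (nf_and D1 D2).
Proof.
  intros HN Hc [Hg1 [Ha1 [Hfr1 Hc1]]] [Hg2 [Ha2 [Hfr2 Hc2]]].
  split; [|split; [|split]]; simpl.
  - intros v Hv; apply in_app_or in Hv as [Hv|Hv]; [apply Hg1 in Hv|apply Hg2 in Hv]; lia.
  - apply in_scope_app with c; auto; lia.
  - intros d b Hdb Hd; apply in_app_or in Hdb as [Hdb|Hdb]; apply in_app_or in Hd as [Hd|Hd].
    + exact (Hfr1 d b Hdb Hd).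
    + destruct (Hc1 d b Hdb) as [Hr _]; apply Ha2 in Hd as [[? _]|?]; lia.
    + destruct (Hc2 d b Hdb) as [Hr _]; apply Ha1 in Hd as [[? _]|?]; lia.
    + exact (Hfr2 d b Hdb Hd).
  - intros d b Hdb; apply in_app_or in Hdb as [Hdb|Hdb].
    + destruct (Hc1 d b Hdb) as [Hr Hb]; split; [lia|intros v Hv].
      apply (in_scope_mono N fvs1 _ lo c); auto with datatypes; lia.
    + destruct (Hc2 d b Hdb) as [Hr Hb]; split; [lia|intros v Hv].
      apply (in_scope_mono N fvs2 _ c hi); auto with datatypes; lia.
Qed.

Lemma nf_scoped_or_of_and N fvs lo hi D1 D2 :
  nf_scoped N fvs lo hi (nf_and D1 D2) -> nf_scoped N fvs lo hi (nf_or D1 D2).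
Proof.
  intros [Hg [Ha [Hfr Hc]]]; split; [|split; [|split]]; auto.
  - intros d b Hdb; apply in_app_or in Hdb as [Hdb|Hdb]; apply in_map_cover in Hdb as [b0 [Hdb ->]];
      apply (Hfr d b0); simpl; auto with datatypes.
  - intros d b Hdb; apply in_app_or in Hdb as [Hdb|Hdb]; apply in_map_cover in Hdb as [b0 [Hdb ->]];
      (destruct (Hc d b0) as [Hr Hb]; [simpl; auto with datatypes|]); split; auto;
      intros v Hv; apply in_app_or in Hv as [Hv|Hv]; auto; apply Ha; simpl; auto with datatypes.
Qed.

Lemma nf_scoped_ex N fvs lo hi x D :
  nf_scoped N fvs lo hi D -> nf_scoped N (remove Nat.eq_dec x fvs) lo hi (nf_ex x D).
Proof.
  intros [Hg [Ha [Hfr Hc]]]; split; [|split; [|split]]; auto; simpl.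
  - apply in_scope_remove; auto.
  - intros d b Hdb Hd; apply in_map_cover in Hdb as [b0 [Hdb ->]].
    apply in_remove in Hd as [Hd _]; exact (Hfr d b0 Hdb Hd).
  - intros d b Hdb; apply in_map_cover in Hdb as [b0 [Hdb ->]].
    destruct (Hc d b0 Hdb) as [Hr Hb]; split; auto; apply in_scope_remove.
    intros v Hv; apply in_app_or in Hv as [Hv|Hv]; auto.
Qed.

Lemma nf_scoped_all N fvs lo hi x D :
  nf_scoped N fvs lo hi D -> nf_scoped N (remove Nat.eq_dec x fvs) lo hi (nf_all x D).
Proof.
  intros [Hg [Ha [Hfr Hc]]]; split; [|split; [|split]]; auto; simpl.
  - apply in_scope_remove; auto.
  - intros d b Hdb Hd; apply in_map_cover in Hdb as [b0 [Hdb ->]].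
    apply in_remove in Hd as [Hd _]; exact (Hfr d b0 Hdb Hd).
  - intros d b Hdb; apply in_map_cover in Hdb as [b0 [Hdb ->]].
    destruct (Hc d b0 Hdb) as [Hr Hb]; split; auto; apply in_scope_remove; auto.
Qed.

End NormalFormSyntax.

Definition supplement {M : Type} (X : team M) (v : nat) (G : assignment M -> M -> Prop) : team M :=
  fun s' => exists s m, X s /\ G s m /\ s' = upd s v m.

Definition duplicate {M : Type} (X : team M) (v : nat) : team M :=
  fun s' => exists s m, X s /\ s' = upd s v m.

(* Needed for constancy atoms only: a variable undefined on the whole team is constant, but it
   fails every first-order equation. *)
Definition team_defines {M : Type} (X : team M) (vs : list nat) : Prop :=
  forall s, X s -> forall v, In v vs -> s v <> None.

Lemma team_defines_union {M : Type} (X Y Z : team M) vs1 vs2 :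
  (forall s, X s <-> Y s \/ Z s) -> team_defines X (vs1 ++ vs2) ->
  team_defines Y vs1 /\ team_defines Z vs2.
Proof.
  intros HX Hdef; split; intros s Hs v Hv; apply (Hdef s); auto with datatypes;
    apply HX; auto.
Qed.

Lemma team_defines_upd {M : Type} (X Y : team M) x vs :
  (forall s', Y s' -> exists s m, X s /\ s' = upd s x m) ->
  team_defines X (remove Nat.eq_dec x vs) -> team_defines Y vs.
Proof.
  intros HY HX s' Hs' v Hv; destruct (HY s' Hs') as [s [m [Hs ->]]].
  unfold upd; destruct (Nat.eqb_spec v x); [discriminate|].
  apply (HX s Hs), in_in_remove; auto.
Qed.

Section NormalFormSemantics.
Context {F Rl : Type} (A : structure F Rl) (N : nat).

Definition nf_sem (X : team (dom A)) (D : nf F Rl) (e : nat -> dom A) : Prop :=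
  tarski A (merge N empty_asg e) (nf_glob D) /\
  (forall s, X s -> tarski A (merge N s e) (nf_flat D)) /\
  (forall d b, In (d, b) (nf_cover D) ->
     forall m, exists s, X s /\ tarski A (merge N s (set_param e d m)) b).

Definition nf_list_sat (X : team (dom A)) (Ds : list (nf F Rl)) : Prop :=
  exists D, In D Ds /\ exists e, nf_sem X D e.

Lemma merge_agree lo hi s (e e' : nat -> dom A) v :
  (forall u, lo <= u < hi -> e u = e' u) -> v < N \/ lo <= v < hi ->
  merge N s e v = merge N s e' v.
Proof.
  intros He Hv; unfold merge; destruct (Nat.ltb_spec v N); auto.
  f_equal; apply He; lia.
Qed.

Lemma nf_sem_params fvs lo hi X D e e' :
  nf_scoped N fvs lo hi D -> (forall v, lo <= v < hi -> e v = e' v) ->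
  nf_sem X D e -> nf_sem X D e'.
Proof.
  intros [Hg [Ha [_ Hc]]] He [Sg [Sa Sc]]; split; [|split].
  - apply (tarski_agree _ _ (merge N empty_asg e)); auto.
    intros v Hv; apply (merge_agree lo hi); auto.
  - intros s Hs; apply (tarski_agree _ _ (merge N s e)); auto.
    intros v Hv; apply (merge_agree lo hi); auto; destruct (Ha v Hv) as [[]|]; auto.
  - intros d b Hdb m; destruct (Sc d b Hdb m) as [s [Hs Hb]]; exists s; split; auto.
    apply (tarski_agree _ _ (merge N s (set_param e d m))); auto.
    intros v Hv; apply (merge_agree lo hi).
    + intros u Hu; unfold set_param; destruct (u =? d); auto.
    + destruct (Hc d b Hdb) as [_ Hb']; destruct (Hb' v Hv) as [[]|]; auto.
Qed.

Lemma nf_sem_glue_l fvs lo c X D e1 e2 :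
  nf_scoped N fvs lo c D -> nf_sem X D e1 -> nf_sem X D (glue c e1 e2).
Proof.
  intros HD; apply (nf_sem_params fvs lo c); auto.
  intros v Hv; unfold glue; destruct (Nat.ltb_spec v c); auto; lia.
Qed.

Lemma nf_sem_glue_r fvs c hi X D e1 e2 :
  nf_scoped N fvs c hi D -> nf_sem X D e2 -> nf_sem X D (glue c e1 e2).
Proof.
  intros HD; apply (nf_sem_params fvs c hi); auto.
  intros v Hv; unfold glue; destruct (Nat.ltb_spec v c); auto; lia.
Qed.

Lemma tarski_set_param_fresh s e d m p :
  ~ In d (fo_fv p) -> (tarski A (merge N s (set_param e d m)) p <-> tarski A (merge N s e) p).
Proof.
  intros Hd; apply tarski_agree; intros v Hv; unfold merge, set_param.
  destruct (v <? N); auto; destruct (Nat.eqb_spec v d); subst; tauto.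
Qed.

Lemma nf_sem_and X D1 D2 e : nf_sem X (nf_and D1 D2) e <-> nf_sem X D1 e /\ nf_sem X D2 e.
Proof.
  unfold nf_sem; simpl; split.
  - intros [[G1 G2] [Ha Hc]]; split; (split; [auto|split]);
      try (intros s Hs; apply (Ha s Hs)); intros d b Hdb; apply Hc, in_or_app; auto.
  - intros [[G1 [A1 C1]] [G2 [A2 C2]]]; split; [|split]; auto.
    intros d b Hdb; apply in_app_or in Hdb as [Hdb|Hdb]; auto.
Qed.

Lemma nf_sem_or X D1 D2 e :
  cover_fresh D1 -> cover_fresh D2 ->
  (nf_sem X (nf_or D1 D2) e <->
   exists Y Z, (forall s, X s <-> Y s \/ Z s) /\ nf_sem Y D1 e /\ nf_sem Z D2 e).
Proof.
  intros Hfr1 Hfr2; unfold nf_sem; simpl; split.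
  - intros [[G1 G2] [Ha Hc]].
    exists (fun s => X s /\ tarski A (merge N s e) (nf_flat D1)),
           (fun s => X s /\ tarski A (merge N s e) (nf_flat D2)).
    split; [intros s; specialize (Ha s); tauto|].
    split; (split; [auto|split; [intros s [_ Hs]; auto|]]); intros d b Hdb m.
    + destruct (Hc d (FAnd (nf_flat D1) b)) with m as [s [Hs [Hs1 Hb]]].
      { apply in_or_app; left; apply in_map_cover; eauto. }
      exists s; rewrite tarski_set_param_fresh in Hs1 by (apply (Hfr1 d b); auto); auto.
    + destruct (Hc d (FAnd (nf_flat D2) b)) with m as [s [Hs [Hs2 Hb]]].
      { apply in_or_app; right; apply in_map_cover; eauto. }
      exists s; rewrite tarski_set_param_fresh in Hs2 by (apply (Hfr2 d b); auto); auto.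
  - intros [Y [Z [HX [[G1 [A1 C1]] [G2 [A2 C2]]]]]]; split; [|split]; auto.
    + intros s Hs; apply HX in Hs as [Hs|Hs]; auto.
    + intros d b Hdb m; apply in_app_or in Hdb as [Hdb|Hdb];
        apply in_map_cover in Hdb as [b0 [Hdb ->]].
      * destruct (C1 d b0 Hdb m) as [s [Hs Hb]]; exists s; split; [apply HX; auto|split; auto].
        rewrite tarski_set_param_fresh by (apply (Hfr1 d b0); auto); auto.
      * destruct (C2 d b0 Hdb m) as [s [Hs Hb]]; exists s; split; [apply HX; auto|split; auto].
        rewrite tarski_set_param_fresh by (apply (Hfr2 d b0); auto); auto.
Qed.

Lemma nf_sem_ex x X D e :
  x < N -> cover_fresh D ->
  (nf_sem X (nf_ex x D) e <->
   exists G, (forall s, X s -> exists m, G s m) /\ nf_sem (supplement X x G) D e).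
Proof.
  intros Hx Hfr; unfold nf_sem; simpl; split.
  - intros [Sg [Sa Sc]]; exists (fun s m => tarski A (merge N (upd s x m) e) (nf_flat D)).
    split; [|split; [|split]]; auto.
    + intros s Hs; destruct (Sa s Hs) as [m Hm]; rewrite <- merge_upd_team in Hm; eauto.
    + intros s' [s [m [_ [Hm ->]]]]; auto.
    + intros d b Hdb m'; destruct (Sc d (FEx x (FAnd (nf_flat D) b))) with m'
        as [s [Hs [m [Hm Hb]]]]; [apply in_map_cover; eauto|].
      rewrite <- merge_upd_team in Hm, Hb by auto.
      rewrite tarski_set_param_fresh in Hm by (apply (Hfr d b); auto).
      exists (upd s x m); split; auto; exists s, m; auto.
  - intros [G [HG [Sg [Sa Sc]]]]; split; [|split]; auto.
    + intros s Hs; destruct (HG s Hs) as [m Hm]; exists m.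
      rewrite <- merge_upd_team by auto; apply Sa; exists s, m; auto.
    + intros d b Hdb m'; apply in_map_cover in Hdb as [b0 [Hdb ->]].
      destruct (Sc d b0 Hdb m') as [s' [[s [m [Hs [Hm ->]]]] Hb]].
      exists s; split; auto; exists m; rewrite <- merge_upd_team by auto; split; auto.
      rewrite tarski_set_param_fresh by (apply (Hfr d b0); auto).
      apply Sa; exists s, m; auto.
Qed.

Lemma nf_sem_all x X D e :
  x < N -> (nf_sem X (nf_all x D) e <-> nf_sem (duplicate X x) D e).
Proof.
  intros Hx; unfold nf_sem; simpl; split.
  - intros [Sg [Sa Sc]]; split; [|split]; auto.
    + intros s' [s [m [Hs ->]]]; rewrite merge_upd_team by auto; apply Sa; auto.
    + intros d b Hdb m'; destruct (Sc d (FEx x b)) with m' as [s [Hs [m Hb]]];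
        [apply in_map_cover; eauto|].
      rewrite <- merge_upd_team in Hb by auto; exists (upd s x m); split; auto; exists s, m; auto.
  - intros [Sg [Sa Sc]]; split; [|split]; auto.
    + intros s Hs m; rewrite <- merge_upd_team by auto; apply Sa; exists s, m; auto.
    + intros d b Hdb m'; apply in_map_cover in Hdb as [b0 [Hdb ->]].
      destruct (Sc d b0 Hdb m') as [s' [[s [m [Hs ->]]] Hb]].
      exists s; split; auto; exists m; rewrite <- merge_upd_team by auto; auto.
Qed.

Lemma nf_list_sat_single X D : nf_list_sat X [D] <-> exists e, nf_sem X D e.
Proof. split; [intros [D' [[<-|[]] HD]]|intros HD; exists D; split; [left|]]; auto. Qed.

Lemma nf_list_sat_app X Ds1 Ds2 :
  nf_list_sat X (Ds1 ++ Ds2) <-> nf_list_sat X Ds1 \/ nf_list_sat X Ds2.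
Proof.
  unfold nf_list_sat; setoid_rewrite in_app_iff; split.
  - intros [D [[H|H] HD]]; [left|right]; eauto.
  - intros [[D [H HD]]|[D [H HD]]]; eauto.
Qed.

Lemma nf_list_sat_and fvs1 fvs2 lo c hi X Ds1 Ds2 :
  (forall D, In D Ds1 -> nf_scoped N fvs1 lo c D) ->
  (forall D, In D Ds2 -> nf_scoped N fvs2 c hi D) ->
  (nf_list_sat X (nf_prod nf_and Ds1 Ds2) <-> nf_list_sat X Ds1 /\ nf_list_sat X Ds2).
Proof.
  intros Hs1 Hs2; unfold nf_list_sat; setoid_rewrite in_nf_prod; split.
  - intros [D [[D1 [D2 [H1 [H2 ->]]]] [e He]]].
    apply nf_sem_and in He as [He1 He2]; split; eauto.
  - intros [[D1 [H1 [e1 He1]]] [D2 [H2 [e2 He2]]]].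
    exists (nf_and D1 D2); split; [eauto 6|exists (glue c e1 e2)].
    apply nf_sem_and; split; [eapply nf_sem_glue_l|eapply nf_sem_glue_r]; eauto.
Qed.

Lemma nf_list_sat_or fvs1 fvs2 lo c hi X Ds1 Ds2 :
  (forall D, In D Ds1 -> nf_scoped N fvs1 lo c D) ->
  (forall D, In D Ds2 -> nf_scoped N fvs2 c hi D) ->
  (nf_list_sat X (nf_prod nf_or Ds1 Ds2) <->
   exists Y Z, (forall s, X s <-> Y s \/ Z s) /\ nf_list_sat Y Ds1 /\ nf_list_sat Z Ds2).
Proof.
  intros Hs1 Hs2; unfold nf_list_sat; setoid_rewrite in_nf_prod; split.
  - intros [D [[D1 [D2 [H1 [H2 ->]]]] [e He]]].
    apply nf_sem_or in He as [Y [Z [HX [He1 He2]]]];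
      [|apply Hs1|apply Hs2]; auto; exists Y, Z; split; [|split]; eauto.
  - intros [Y [Z [HX [[D1 [H1 [e1 He1]]] [D2 [H2 [e2 He2]]]]]]].
    exists (nf_or D1 D2); split; [eauto 6|exists (glue c e1 e2)].
    apply nf_sem_or; [apply Hs1|apply Hs2|exists Y, Z]; auto.
    split; [|split]; auto; [eapply nf_sem_glue_l|eapply nf_sem_glue_r]; eauto.
Qed.

Lemma nf_list_sat_ex x X Ds :
  x < N -> (forall D, In D Ds -> cover_fresh D) ->
  (nf_list_sat X (map (nf_ex x) Ds) <->
   exists G, (forall s, X s -> exists m, G s m) /\ nf_list_sat (supplement X x G) Ds).
Proof.
  intros Hx Hfr; unfold nf_list_sat; setoid_rewrite in_map_iff; split.
  - intros [D' [[D [<- HD]] [e He]]].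
    apply nf_sem_ex in He as [G [HG He]]; auto; exists G; split; eauto.
  - intros [G [HG [D [HD [e He]]]]]; exists (nf_ex x D); split; eauto.
    exists e; apply nf_sem_ex; eauto.
Qed.

Lemma nf_list_sat_all x X Ds :
  x < N -> (nf_list_sat X (map (nf_all x) Ds) <-> nf_list_sat (duplicate X x) Ds).
Proof.
  intros Hx; unfold nf_list_sat; setoid_rewrite in_map_iff; split.
  - intros [D' [[D [<- HD]] [e He]]]; apply nf_sem_all in He; eauto.
  - intros [D [HD [e He]]]; exists (nf_all x D); split; eauto.
    exists e; apply nf_sem_all; auto.
Qed.

Lemma nf_lit_sem X a :
  (forall v, In v (lit_fv a) -> v < N) ->
  (tsat A X (TLit a) <-> exists e, nf_sem X (NF fo_top (FLit a) []) e).
Proof.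
  intros Ha.
  assert (Hlit : forall s e, lit_sat A s a <-> tarski A (merge N s e) (FLit a)).
  { intros s e; apply (tarski_agree A (FLit a)); intros v Hv; unfold merge.
    rewrite (proj2 (Nat.ltb_lt v N)); auto. }
  unfold nf_sem; cbn [tsat nf_glob nf_flat nf_cover]; split.
  - intros H; exists (fun _ => dom_inh A).
    split; [apply tarski_top|split; [intros s Hs; apply Hlit; auto|intros ? ? []]].
  - intros [e [_ [H _]]] s Hs; apply (Hlit s e); auto.
Qed.

Lemma tarski_const_eqs s e b vs :
  (forall v, In v vs -> v < N) -> N <= b ->
  (tarski A (merge N s e) (const_eqs b vs) <->
   forall i v, nth_error vs i = Some v -> s v = Some (e (b + i))).
Proof.
  revert b; induction vs as [|v vs IH]; intros b Hvs Hb; cbn [const_eqs].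
  - split; [intros _ [|i] u Hi; discriminate|intros _; apply tarski_top].
  - cbn [tarski lit_sat eval]; rewrite IH by (simpl in Hvs; auto; lia).
    unfold merge.
    rewrite (proj2 (Nat.ltb_lt v N)), (proj2 (Nat.ltb_ge b N)) by (simpl in Hvs; auto).
    split.
    + intros [[m [Hv [= <-]]] Hrest] [|i] u Hi; simpl in Hi.
      * injection Hi as <-; rewrite Nat.add_0_r; auto.
      * replace (b + S i) with (S b + i) by lia; auto.
    + intros H; split.
      * exists (e b); specialize (H 0 v eq_refl); rewrite Nat.add_0_r in H; auto.
      * intros i u Hi; replace (S b + i) with (b + S i) by lia; apply H; auto.
Qed.

Lemma nf_const_sem X b vs :
  (forall v, In v vs -> v < N) -> N <= b -> team_defines X vs ->
  (tsat A X (TConst vs) <-> exists e, nf_sem X (NF fo_top (const_eqs b vs) []) e).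
Proof.
  intros Hvs Hb Hdef; unfold nf_sem; cbn [tsat nf_glob nf_flat nf_cover]; split.
  - intros Hconst; destruct (classic (exists s0, X s0)) as [[s0 Hs0]|Hempty].
    + exists (fun p => match s0 (nth (p - b) vs 0) with Some m => m | None => dom_inh A end).
      split; [apply tarski_top|split; [|intros ? ? []]].
      intros s Hs; apply tarski_const_eqs; auto; intros i v Hi.
      replace (b + i - b) with i by lia; rewrite (nth_error_nth vs i 0 Hi).
      assert (Hs0v : s v = s0 v).
      { pose proof (f_equal (fun l => nth_error l i) (Hconst s s0 Hs Hs0)) as E; simpl in E.
        rewrite !nth_error_map, Hi in E; injection E; auto. }
      assert (Hv : In v vs) by (eapply nth_error_In; eauto).
      rewrite Hs0v; destruct (s0 v) eqn:E; [reflexivity|destruct (Hdef s0 Hs0 v Hv E)].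
    + exists (fun _ => dom_inh A); split; [apply tarski_top|split; [|intros ? ? []]].
      intros s Hs; destruct Hempty; eauto.
  - intros [e [_ [Hflat _]]] s s' Hs Hs'; apply map_ext_in; intros v Hv.
    apply In_nth_error in Hv as [i Hi].
    apply (tarski_const_eqs s e b) in Hvs as Es; auto.
    apply (tarski_const_eqs s' e b) in Hvs as Es'; auto.
    rewrite (proj1 Es (Hflat s Hs) i v Hi), (proj1 Es' (Hflat s' Hs') i v Hi); auto.
Qed.

Lemma nf_all1_sem X v b :
  v < N -> N <= b ->
  (tsat A X (TAll1 v) <->
   exists e, nf_sem X (NF fo_top fo_top [(b, FLit (LEq (Var v) (Var b)))]) e).
Proof.
  intros Hv Hb.
  assert (Heq : forall s e m,
    tarski A (merge N s (set_param e b m)) (FLit (LEq (Var v) (Var b))) <-> s v = Some m).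
  { intros s e m; cbn [tarski lit_sat eval]; unfold merge, set_param.
    rewrite (proj2 (Nat.ltb_lt v N) Hv), (proj2 (Nat.ltb_ge b N) Hb), Nat.eqb_refl.
    split; [intros [m' [-> E]]; congruence|intros ->; eauto]. }
  unfold nf_sem; cbn [tsat nf_glob nf_flat nf_cover]; split.
  - intros Hall; exists (fun _ => dom_inh A).
    split; [apply tarski_top|split; [intros; apply tarski_top|]].
    intros d c [E|[]] m; injection E as <- <-.
    destruct (Hall m) as [s [Hs Hsm]]; exists s; rewrite Heq; auto.
  - intros [e [_ [_ Hc]]] m; destruct (Hc b _ (or_introl eq_refl) m) as [s [Hs Hsm]].
    rewrite Heq in Hsm; eauto.
Qed.

Lemma nf_brack_sem X th :
  fo_sentence th -> (tsat A X (TBrack th) <-> exists e, nf_sem X (NF th fo_top []) e).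
Proof.
  intros Hth; unfold nf_sem, fo_true; cbn [tsat nf_glob nf_flat nf_cover].
  assert (Hclosed : forall e, tarski A empty_asg th <-> tarski A (merge N empty_asg e) th).
  { intros e; apply tarski_agree; rewrite Hth; intros v []. }
  split.
  - intros H; exists (fun _ => dom_inh A).
    split; [apply Hclosed; auto|split; [intros; apply tarski_top|intros ? ? []]].
  - intros [e [H _]]; apply (Hclosed e); auto.
Qed.

End NormalFormSemantics.

Section Translation.
Context {F Rl : Type}.

Fixpoint width (p : tformula F Rl) : nat :=
  match p with
  | TLit _ | TBrack _ => 0
  | TConst vs => length vs
  | TAll1 _ => 1
  | TAnd p q | TOr p q | TCOr p q => width p + width q
  | TEx _ p | TAll _ p => width p
  end.

Fixpoint vars (p : tformula F Rl) : list nat :=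
  match p with
  | TLit a => lit_fv a
  | TBrack _ => []
  | TConst vs => vs
  | TAll1 v => [v]
  | TAnd p q | TOr p q | TCOr p q => vars p ++ vars q
  | TEx v p | TAll v p => v :: vars p
  end.

(* The parameters of [to_nf b p] are [b, ..., b + width p - 1]: one for each argument of a
   constancy atom and one for each All_1 atom. *)
Fixpoint to_nf (b : nat) (p : tformula F Rl) : list (nf F Rl) :=
  match p with
  | TLit a => [NF fo_top (FLit a) []]
  | TConst vs => [NF fo_top (const_eqs b vs) []]
  | TAll1 v => [NF fo_top fo_top [(b, FLit (LEq (Var v) (Var b)))]]
  | TBrack th => [NF th fo_top []]
  | TAnd p q => nf_prod nf_and (to_nf b p) (to_nf (b + width p) q)
  | TOr p q => nf_prod nf_or (to_nf b p) (to_nf (b + width p) q)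
  | TCOr p q => to_nf b p ++ to_nf (b + width p) q
  | TEx v p => map (nf_ex v) (to_nf b p)
  | TAll v p => map (nf_all v) (to_nf b p)
  end.

Lemma to_nf_scoped p : forall N b,
  (forall v, In v (vars p) -> v < N) -> N <= b -> brackets_ok p ->
  forall D, In D (to_nf b p) -> nf_scoped N (t_fv p) b (b + width p) D.
Proof.
  induction p as [a|p IHp q IHq|p IHp q IHq|x p IHp|x p IHp|vs|x|p IHp q IHq|th];
    intros N b Hv Hb Hbr D HD; cbn [to_nf vars brackets_ok t_fv width] in *.
  - destruct HD as [<-|[]]; split; [intros v []|split; [|split; intros ? ? []]].
    intros v Hv'; left; auto.
  - apply in_nf_prod in HD as [D1 [D2 [H1 [H2 ->]]]]; rewrite Nat.add_assoc.
    apply nf_scoped_and with (b + width p); try lia;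
      [apply IHp|apply IHq]; auto with datatypes; try lia; tauto.
  - apply in_nf_prod in HD as [D1 [D2 [H1 [H2 ->]]]]; rewrite Nat.add_assoc.
    apply nf_scoped_or_of_and, nf_scoped_and with (b + width p); try lia;
      [apply IHp|apply IHq]; auto with datatypes; try lia; tauto.
  - apply in_map_iff in HD as [D' [<- HD]]; apply nf_scoped_ex, IHp; auto with datatypes.
  - apply in_map_iff in HD as [D' [<- HD]]; apply nf_scoped_all, IHp; auto with datatypes.
  - destruct HD as [<-|[]]; split; [intros v []|split; [|split; intros ? ? []]].
    intros u Hu; apply fo_fv_const_eqs in Hu as [Hu|Hu]; [left|right]; auto.
  - destruct HD as [<-|[]]; split; [intros v []|split; [intros v []|split]].
    + intros d c [E|[]] Hd; contradiction.
    + intros d c [E|[]]; injection E as <- <-; split; [lia|].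
      intros u [<-|[<-|[]]]; [left; split; auto with datatypes|right; lia].
  - apply in_app_or in HD as [HD|HD].
    + apply (nf_scoped_mono N (t_fv p) _ b (b + width p)); auto with datatypes; try lia.
      apply IHp; auto with datatypes; tauto.
    + apply (nf_scoped_mono N (t_fv q) _ (b + width p) (b + width p + width q));
        auto with datatypes; try lia.
      apply IHq; auto with datatypes; try lia; tauto.
  - destruct HD as [<-|[]]; split; [|split; [intros v []|split; intros ? ? []]].
    unfold fo_sentence in Hbr; cbn [nf_glob]; rewrite Hbr; intros v [].
Qed.

Lemma to_nf_sem (A : structure F Rl) p : forall N b,
  (forall v, In v (vars p) -> v < N) -> N <= b -> brackets_ok p ->
  forall X, team_defines X (t_fv p) -> (tsat A X p <-> nf_list_sat A N X (to_nf b p)).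
Proof.
  induction p as [a|p IHp q IHq|p IHp q IHq|x p IHp|x p IHp|vs|x|p IHp q IHq|th];
    intros N b Hv Hb Hbr X HX; cbn [to_nf vars brackets_ok t_fv width tsat] in *.
  - rewrite nf_list_sat_single; apply nf_lit_sem; auto.
  - destruct Hbr as [Hbp Hbq].
    destruct (team_defines_union X X X (t_fv p) (t_fv q)) as [HXp HXq]; [tauto|auto|].
    rewrite (nf_list_sat_and A N (t_fv p) (t_fv q) b (b + width p) (b + width p + width q));
      [|intros D; apply to_nf_scoped; auto with datatypes; lia..].
    rewrite <- (IHp N b), <- (IHq N (b + width p)); auto with datatypes; try lia; reflexivity.
  - destruct Hbr as [Hbp Hbq].
    rewrite (nf_list_sat_or A N (t_fv p) (t_fv q) b (b + width p) (b + width p + width q));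
      [|intros D; apply to_nf_scoped; auto with datatypes; lia..].
    split; intros [Y [Z [HXYZ [Hp Hq]]]]; exists Y, Z; split; auto;
      destruct (team_defines_union X Y Z (t_fv p) (t_fv q)) as [HY HZ]; auto;
      (split; [apply (IHp N b) in Hp|apply (IHq N (b + width p)) in Hq]);
      auto with datatypes; lia.
  - rewrite nf_list_sat_ex; [|auto with datatypes|].
    + split; intros [G [HG H]]; exists G; split; auto; revert H; apply (IHp N b);
        auto with datatypes; apply (team_defines_upd X _ x); auto;
        intros s' [s [m [Hs [_ ->]]]]; eauto.
    + intros D HD; apply (to_nf_scoped p N b) in HD as [_ [_ [Hfr _]]]; auto with datatypes.
  - rewrite nf_list_sat_all by auto with datatypes; apply (IHp N b); auto with datatypes.
    apply (team_defines_upd X _ x); auto; intros s' [s [m [Hs ->]]]; eauto.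
  - rewrite nf_list_sat_single; apply nf_const_sem; auto.
  - rewrite nf_list_sat_single; apply nf_all1_sem; auto with datatypes.
  - destruct Hbr as [Hbp Hbq].
    destruct (team_defines_union X X X (t_fv p) (t_fv q)) as [HXp HXq]; [tauto|auto|].
    rewrite nf_list_sat_app, <- (IHp N b), <- (IHq N (b + width p));
      auto with datatypes; try lia; reflexivity.
  - rewrite nf_list_sat_single; apply nf_brack_sem; auto.
Qed.

End Translation.

Section Closure.
Context {F Rl : Type}.

Definition nf_body (D : nf F Rl) : fo F Rl :=
  FAnd (nf_glob D)
    (FAnd (nf_flat D) (fo_conj (map (fun c => FAll (fst c) (snd c)) (nf_cover D)))).

Definition nf_close (D : nf F Rl) : fo F Rl := fo_exs (fo_fv (nf_body D)) (nf_body D).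

Lemma nf_close_closed D : fo_fv (nf_close D) = [].
Proof. apply incl_l_nil; intros v Hv; apply fo_fv_exs in Hv; tauto. Qed.

Lemma nf_body_params N lo hi D :
  N <= lo -> nf_scoped N [] lo hi D -> forall v, In v (fo_fv (nf_body D)) -> N <= v.
Proof.
  intros HN [Hg [Ha [_ Hc]]] v Hv; cbn [nf_body fo_fv] in Hv.
  apply in_app_or in Hv as [Hv|Hv]; [apply Hg in Hv; lia|].
  apply in_app_or in Hv as [Hv|Hv].
  - destruct (Ha v Hv) as [[_ []]|]; lia.
  - apply fo_fv_conj in Hv as [q [Hq Hv]]; apply in_map_iff in Hq as [[d b] [<- Hdb]].
    apply in_remove in Hv as [Hv _]; destruct (Hc d b Hdb) as [_ Hb].
    destruct (Hb v Hv) as [[_ []]|]; lia.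
Qed.

Variable (A : structure F Rl) (N : nat).

Lemma nf_body_sem D e :
  (forall d b, In (d, b) (nf_cover D) -> N <= d) ->
  (tarski A (merge N empty_asg e) (nf_body D) <-> nf_sem A N (fun s => s = empty_asg) D e).
Proof.
  intros Hd; unfold nf_body, nf_sem; cbn [tarski]; rewrite tarski_conj; split.
  - intros [Hg [Ha Hc]]; split; [|split]; [auto|intros s ->; auto|].
    intros d b Hdb m; exists empty_asg; split; auto.
    rewrite merge_set_param by eauto; apply (Hc (FAll d b)), in_map_iff; exists (d, b); auto.
  - intros [Hg [Ha Hc]]; split; [|split]; auto.
    intros q Hq; apply in_map_iff in Hq as [[d b] [<- Hdb]]; intros m; simpl.
    destruct (Hc d b Hdb m) as [s [-> Hb]]; rewrite merge_set_param in Hb by eauto; auto.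
Qed.

Lemma nf_close_sem lo hi D :
  N <= lo -> nf_scoped N [] lo hi D ->
  (tarski A empty_asg (nf_close D) <-> exists e, nf_sem A N (fun s => s = empty_asg) D e).
Proof.
  intros HN HD; pose proof (nf_body_params N lo hi D HN HD) as Hparams.
  assert (Hd : forall d b, In (d, b) (nf_cover D) -> N <= d).
  { intros d b Hdb; destruct HD as [_ [_ [_ Hc]]]; destruct (Hc d b Hdb); lia. }
  unfold nf_close; split.
  - intros H; apply tarski_exs_elim in H as [s' [_ [Hdef Hbody]]].
    exists (fun v => match s' v with Some m => m | None => dom_inh A end).
    apply nf_body_sem; auto; revert Hbody; apply tarski_agree; intros v Hv.
    unfold merge; destruct (Nat.ltb_spec v N); [specialize (Hparams v Hv); lia|].
    destruct (s' v) eqn:E; [reflexivity|destruct (Hdef v Hv E)].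
  - intros [e He]; apply (tarski_exs_intro A _ _ _ (merge N empty_asg e)).
    + intros v Hv; unfold merge; destruct (Nat.ltb_spec v N); [specialize (Hparams v Hv); lia|].
      discriminate.
    + intros v Hv Hn; contradiction.
    + apply nf_body_sem; auto.
Qed.

Lemma nf_list_sat_close lo hi Ds :
  N <= lo -> (forall D, In D Ds -> nf_scoped N [] lo hi D) ->
  (nf_list_sat A N (fun s => s = empty_asg) Ds <->
   tarski A empty_asg (fo_disj (map nf_close Ds))).
Proof.
  intros HN HDs; rewrite tarski_disj; unfold nf_list_sat; split.
  - intros [D [HD HDe]]; exists (nf_close D); split; [apply in_map; auto|].
    apply (nf_close_sem lo hi); auto.
  - intros [p [Hp Hsat]]; apply in_map_iff in Hp as [D [<- HD]].
    exists D; split; auto; apply (nf_close_sem lo hi) in Hsat; auto.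
Qed.

End Closure.

Theorem mainTheorem9 (F Rl : Type) (phi : tformula F Rl) :
  t_sentence phi ->
  exists phi' : fo F Rl, fo_sentence phi' /\
    forall A : structure F Rl, t_true A phi <-> fo_true A phi'.
Proof.
  intros [Hclosed Hbr].
  set (N := S (list_max (vars phi))).
  assert (HN : forall v, In v (vars phi) -> v < N).
  { intros v Hv; pose proof (proj1 (list_max_le (vars phi) _) (le_n _)) as Hmax.
    rewrite Forall_forall in Hmax; specialize (Hmax v Hv); unfold N; lia. }
  assert (Hscoped : forall D, In D (to_nf N phi) -> nf_scoped N [] N (N + width phi) D).
  { rewrite <- Hclosed; apply to_nf_scoped; auto. }
  exists (fo_disj (map nf_close (to_nf N phi))); split.
  - apply incl_l_nil; intros v Hv; apply fo_fv_disj in Hv as [p [Hp Hv]].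
    apply in_map_iff in Hp as [D [<- _]]; rewrite nf_close_closed in Hv; contradiction.
  - intros A; unfold t_true, fo_true.
    rewrite (to_nf_sem A phi N N), (nf_list_sat_close A N N (N + width phi)); auto.
    + reflexivity.
    + rewrite Hclosed; intros s _ v [].
Qed.
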